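(* Let $\sigma>0$, $\tau_m>0$, and let $\vec X^m\in\underline{V}^h$ be a parameterization of the polygonal curve network $\Gamma^m$ such that assumptions $(\mathcal A)$, $(\mathcal A_1)$ and $(\mathcal A_2)$ below hold. Let $F^m\in W^h$ be given (in the paper $F^m_i(q^i_j)=\lambda[(u_0(\vec X^m_i(q^i_j))-c^m_{k^+(i)})^2-(u_0(\vec X^m_i(q^i_j))-c^m_{k^-(i)})^2]$, but any element of $W^h$ is allowed). Then there exists a unique pair $(\delta\vec X^{m+1},\kappa_{\mathcal M}^{m+1})\in\underline{V}^h_\Phi\times W^h$ such that $$\Big\langle \tfrac{\delta\vec X^{m+1}}{\tau_m},\,\chi\,\vec\omega^m_{\mathcal M}\Big\rangle^h_m-\sigma\,\langle\kappa^{m+1}_{\mathcal M},\chi\rangle^h_m=\langle F^m,\chi\rangle^h_m\quad\forall\chi\in W^h,$$ $$\langle\kappa^{m+1}_{\mathcal M}\,\vec\omega^m_{\mathcal M},\vec\eta\rangle^h_m+\langle\nabla_s\delta\vec X^{m+1},\nabla_s\vec\eta\rangle_m=-\langle\nabla_s\vec X^m,\nabla_s\vec\eta\rangle_m\quad\forall\vec\eta\in\underline{V}^h_\Phi.$$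
   Context: Let $\Phi\in C^2(\mathbb R^3,\mathbb R)$ and $\mathcal M=\{\vec z:\Phi(\vec z)=0\}$ with $\nabla\Phi\neq0$ on $\mathcal M$; set $\vec n_\Phi=\nabla\Phi/\|\nabla\Phi\|$. Curve network: $N_C$ curves $\Gamma_1,\dots,\Gamma_{N_C}$, each parameterized over $I_i=[0,1]$ with a partition $0=q^i_0<q^i_1<\dots<q^i_{N_i}=1$. A curve is either closed (then $I_i$ is periodic, indices are taken modulo $N_i$, i.e. $N_i\equiv 0$, $N_i+1\equiv1$, $-1\equiv N_i-1$, and $j_0^i:=1$) or open (then $j_0^i:=0$). There are $N_T$ triple junctions; for each $k=1,\dots,N_T$ there are three pairwise distinct curve indices $i_{k,1},i_{k,2},i_{k,3}$ (open curves) and endpoints $\rho_{k,l}\in\{0,1\}$, with node index $j_{k,l}\in\{0,N_{i_{k,l}}\}$ satisfying $q^{i_{k,l}}_{j_{k,l}}=\rho_{k,l}$. Every endpoint of every open curve belongs to some triple junction. Spaces: $W^h$ is the set of $(\eta_1,\dots,\eta_{N_C})$ with $\eta_i\in C(I_i,\mathbb R)$ affine on each $[q^i_{j-1},q^i_j]$. $\underline V^h$ is the set of $(\vec\eta_1,\dots,\vec\eta_{N_C})$ with $\vec\eta_i\in C(I_i,\mathbb R^3)$ affine on each $[q^i_{j-1},q^i_j]$ and $\vec\eta_{i_{k,1}}(\rho_{k,1})=\vec\eta_{i_{k,2}}(\rho_{k,2})=\vec\eta_{i_{k,3}}(\rho_{k,3})$ for all $k$. $\vec X^m=(\vec X^m_1,\dots,\vec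 X^m_{N_C})\in\underline V^h$ is given, with image $\Gamma^m$, and $\nabla\Phi(\vec X^m_i(q^i_j))\ne0$ at all nodes. Inner products: $\langle u,v\rangle_m=\sum_i\int_{I_i}u_i\cdot v_i\,\|(\vec X^m_i)_\rho\|\,d\rho$, and $\nabla_s$ denotes $\partial_\rho/\|(\vec X^m_i)_\rho\|$ (arclength derivative on $\Gamma^m$). With $h^m_{i,j-1/2}=\|\vec X^m_i(q^i_j)-\vec X^m_i(q^i_{j-1})\|$, the mass-lumped product is $\langle u,v\rangle^h_m=\tfrac12\sum_{i=1}^{N_C}\sum_{j=1}^{N_i}h^m_{i,j-1/2}\big[(u_i\cdot v_i)((q^i_j)^-)+(u_i\cdot v_i)((q^i_{j-1})^+)\big]$, one-sided limits. Discrete normals: $\vec\omega^m_{\Phi,i}(q^i_j)=\vec n_\Phi(\vec X^m_i(q^i_j))$; $\vec\omega^m_{d,i}(q^i_j)=\frac{\vec X^m_i(q^i_{j+1})-\vec X^m_i(q^i_{j-1})}{\|\vec X^m_i(q^i_{j+1})-\vec X^m_i(q^i_{j-1})\|}$ for closed curves and for interior nodes of open curves, while for open curves $\vec\omega^m_{d,i}(q^i_0)=\frac{\vec X^m_i(q^i_1)-\vec X^m_i(q^i_0)}{\|\cdot\|}$ and $\vec\omega^m_{d,i}(q^i_{N_i})=\frac{\vec X^m_i(q^i_{N_i})-\vec X^m_i(q^i_{N_i-1})}{\|\cdot\|}$; $\vec\omega^m_{\mathcal M,i}(q^i_j)=\vec\omega^m_{d,i}(q^i_j)\times\vec\omega^m_{\Phi,i}(q^i_j)$;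 these are extended to $I_i$ as piecewise linear interpolants. $\underline V^h_\Phi=\{\vec\eta\in\underline V^h:\vec\eta_i(q^i_j)\cdot\vec\omega^m_{\Phi,i}(q^i_j)=0$ for all $i$ and nodes $j\}$. Assumption $(\mathcal A)$: $h^m_{i,j-1/2}>0$ for all $i$, $j=1,\dots,N_i$, and $\vec X^m_i(q^i_{j+1})\neq\vec X^m_i(q^i_{j-1})$ for $j=1,\dots,N_i$ if $\Gamma_i$ is closed and for $j=1,\dots,N_i-1$ if $\Gamma_i$ is open. Assumption $(\mathcal A_1)$: for every closed curve $\Gamma_i$, $\dim\operatorname{span}\{\vec\omega^m_{\mathcal M,i}(q^i_j),\vec\omega^m_{\Phi,i}(q^i_j)\}_{j=1}^{N_i}=3$. Assumption $(\mathcal A_2)$: for every triple junction $k$, $\dim\operatorname{span}\bigcup_{l=1}^3\{\vec\omega^m_{\mathcal M,i_{k,l}}(q^{i_{k,l}}_j),\vec\omega^m_{\Phi,i_{k,l}}(q^{i_{k,l}}_j)\}_{j=1}^{N_{i_{k,l}}-1}=3$. *)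

From HB Require Import structures.
From mathcomp Require Import all_boot all_order all_algebra.
Unset Printing Implicit Defensive.
Import Order.TTheory GRing.Theory Num.Theory.
Local Open Scope ring_scope.

Section Network.
Context {R : rcfType}.

Definition dot (u v : 'rV[R]_3) : R := (u *m v^T) 0 0.
Definition vnorm (u : 'rV[R]_3) : R := Num.sqrt (dot u u).
Definition normalize (u : 'rV[R]_3) : 'rV[R]_3 := (vnorm u)^-1 *: u.
Definition comp (u : 'rV[R]_3) (k : nat) : R := u 0 (inord k).
Definition cross (u v : 'rV[R]_3) : 'rV[R]_3 :=
  \row_(k < 3)
    (if (k : nat) == 0%N then comp u 1 * comp v 2 - comp u 2 * comp v 1
     else if (k : nat) == 1%N then comp u 2 * comp v 0 - comp u 0 * comp v 2
     else comp u 0 * comp v 1 - comp u 1 * comp v 0).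

(* dimension of the span of a finite family of vectors = rank of the matrix
   having them as rows *)
Definition rowsmx (s : seq 'rV[R]_3) : 'M[R]_(size s, 3) :=
  \matrix_(k < size s) nth 0 s k.

Context {NC : nat}.
(* N i = number of intervals of the partition of I_i; nodes are 0..N i *)
Variable N : 'I_NC -> nat.
Variable closed : 'I_NC -> bool.

(* nodal values of piecewise linear functions on the curves *)
Definition scalfun := forall i : 'I_NC, 'I_(N i).+1 -> R.
Definition vecfun := forall i : 'I_NC, 'I_(N i).+1 -> 'rV[R]_3.

Definition at_ {T : Type} {n : nat} (f : 'I_n.+1 -> T) (j : nat) : T := f (inord j).

(* neighbouring node indices (periodic for closed curves; for open curves the
   one-sided convention at the endpoints used in the definition of omega_d) *)
Definition nxt (i : 'I_NC) (j : nat) : nat :=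
  if j == N i then (if closed i then 1%N else N i) else j.+1.
Definition prv (i : 'I_NC) (j : nat) : nat :=
  if j == 0%N then (if closed i then (N i).-1 else 0%N) else j.-1.

(* continuity on the periodic interval for closed curves: node 0 = node N_i *)
Definition periodic {T : Type} (f : forall i : 'I_NC, 'I_(N i).+1 -> T) :=
  forall i : 'I_NC, closed i -> f i ord0 = f i ord_max.

Definition inW (u : scalfun) : Prop := periodic u.

Definition endnode (i : 'I_NC) (r : bool) : nat := if r then N i else 0%N.

Context {NT : nat}.
Variable ic : 'I_NT -> 'I_3 -> 'I_NC.
Variable rho : 'I_NT -> 'I_3 -> bool.

Definition inV (X : vecfun) : Prop :=
  periodic X /\
  forall (k : 'I_NT) (l l' : 'I_3),
    at_ (X (ic k l)) (endnode (ic k l) (rho k l)) =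
    at_ (X (ic k l')) (endnode (ic k l') (rho k l')).

Variable gradPhi : 'rV[R]_3 -> 'rV[R]_3.
Variable X : vecfun.

Definition hseg (i : 'I_NC) (j : nat) : R :=
  vnorm (at_ (X i) j - at_ (X i) j.-1).

Definition omega_d (i : 'I_NC) (j : nat) : 'rV[R]_3 :=
  normalize (at_ (X i) (nxt i j) - at_ (X i) (prv i j)).
Definition omega_Phi (i : 'I_NC) (j : nat) : 'rV[R]_3 :=
  normalize (gradPhi (at_ (X i) j)).
Definition omega_M (i : 'I_NC) (j : nat) : 'rV[R]_3 :=
  cross (omega_d i j) (omega_Phi i j).

Definition omegaM_fun : vecfun := fun i j => omega_M i j.

Definition inVPhi (eta : vecfun) : Prop :=
  inV eta /\ forall (i : 'I_NC) (j : 'I_(N i).+1), dot (eta i j) (omega_Phi i j) = 0.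

Definition mlump_s (u v : scalfun) : R :=
  2^-1 * \sum_(i < NC) \sum_(1 <= j < (N i).+1)
     hseg i j * (at_ (u i) j * at_ (v i) j + at_ (u i) j.-1 * at_ (v i) j.-1).
Definition mlump_v (U V : vecfun) : R :=
  2^-1 * \sum_(i < NC) \sum_(1 <= j < (N i).+1)
     hseg i j * (dot (at_ (U i) j) (at_ (V i) j) + dot (at_ (U i) j.-1) (at_ (V i) j.-1)).

(* < nabla_s U, nabla_s V >_m, computed exactly for piecewise linear U, V:
   on [q_{j-1},q_j], nabla_s U = (U_j - U_{j-1}) / h_{j-1/2} and the arclength
   element integrates to h_{j-1/2} *)
Definition stiff (U V : vecfun) : R :=
  \sum_(i < NC) \sum_(1 <= j < (N i).+1)
     dot (at_ (U i) j - at_ (U i) j.-1) (at_ (V i) j - at_ (V i) j.-1) / hseg i j.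

Definition svmul (chi : scalfun) (U : vecfun) : vecfun := fun i j => chi i j *: U i j.
Definition cvmul (c : R) (U : vecfun) : vecfun := fun i j => c *: U i j.

Definition assumption_A : Prop :=
  (forall (i : 'I_NC) (j : nat), (1 <= j <= N i)%N -> 0 < hseg i j) /\
  (forall (i : 'I_NC) (j : nat), (1 <= j)%N ->
     (if closed i then (j <= N i)%N else (j < N i)%N) ->
     at_ (X i) (nxt i j) != at_ (X i) (prv i j)).

Definition assumption_A1 : Prop :=
  forall i : 'I_NC, closed i ->
    \rank (rowsmx ([seq omega_M i j | j <- iota 1 (N i)] ++
                   [seq omega_Phi i j | j <- iota 1 (N i)])) = 3%N.

Definition assumption_A2 : Prop :=
  forall k : 'I_NT,
    \rank (rowsmx (flatten
      [seq [seq omega_M (ic k l) j | j <- iota 1 (N (ic k l)).-1] ++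
           [seq omega_Phi (ic k l) j | j <- iota 1 (N (ic k l)).-1]
      | l <- enum 'I_3])) = 3%N.

End Network.

From Pilot Require Import Defs.
From HB Require Import structures.
From mathcomp Require Import all_boot all_order all_algebra.
From mathcomp Require Import ring.
From Stdlib Require Import FunctionalExtensionality.
Import Order.TTheory GRing.Theory Num.Theory.
Local Open Scope ring_scope.

(* The system is linear in (dX, kappa) and square once posed on the
   finite-dimensional space of admissible nodal values, so it suffices that the
   homogeneous system (zero right-hand sides) has only the trivial solution.
   Testing it with chi = kappa and eta = dX gives
   sigma |kappa|_h^2 + tau^-1 |nabla_s dX|^2 = 0, so kappa = 0 and dX is
   constant on each curve.  Testing once more with chi = dX . omega_M shows that
   this constant is orthogonal to omega_M at every node, and it is orthogonal to
   omega_Phi since dX lies in V^h_Phi.  Assumption (A1) on closed curves, and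
   (A2) together with the junction condition on open curves, force it to
   vanish. *)

Lemma nodal_ext T NC (N : 'I_NC -> nat) (f g : forall i : 'I_NC, 'I_(N i).+1 -> T) :
  (forall i j, f i j = g i j) -> f = g.
Proof.
move=> fg; apply: functional_extensionality_dep => i.
exact: functional_extensionality (fg i).
Qed.

Lemma at_ord0 T n (f : 'I_n.+1 -> T) : at_ f 0 = f ord0.
Proof. by congr f; apply: val_inj; rewrite /= inordK. Qed.

Lemma at_ord_max T n (f : 'I_n.+1 -> T) : at_ f n = f ord_max.
Proof. by congr f; apply: val_inj; rewrite /= inordK. Qed.

Section Dot.
Context {R : rcfType}.
Implicit Types u v w : 'rV[R]_3.

Lemma dotE u v : dot u v = \sum_(k < 3) u 0 k * v 0 k.
Proof. by rewrite /dot mxE; apply: eq_bigr => k _; rewrite mxE. Qed.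

Lemma dotC u v : dot u v = dot v u.
Proof. by rewrite /dot -[u *m _]trmxK trmx_mul trmxK mxE. Qed.

Lemma dotDl u v w : dot (u + v) w = dot u w + dot v w.
Proof. by rewrite /dot mulmxDl mxE. Qed.

Lemma dotBl u v w : dot (u - v) w = dot u w - dot v w.
Proof. by rewrite /dot mulmxBl !mxE. Qed.

Lemma dotZl a u w : dot (a *: u) w = a * dot u w.
Proof. by rewrite /dot -scalemxAl mxE. Qed.

Lemma dot0l u : dot 0 u = 0.
Proof. by rewrite /dot mul0mx mxE. Qed.

Lemma dot0r u : dot u 0 = 0.
Proof. by rewrite dotC dot0l. Qed.

Lemma dot_ge0 u : 0 <= dot u u.
Proof. by rewrite dotE; apply: sumr_ge0 => k _; rewrite -expr2 sqr_ge0. Qed.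

Lemma dot_eq0 u : (dot u u == 0) = (u == 0).
Proof.
apply/idP/eqP => [|->]; last by rewrite dot0l.
rewrite dotE psumr_eq0 => [/allP u0|k _]; last by rewrite -expr2 sqr_ge0.
apply/rowP => k; rewrite mxE.
by have /(_ (mem_index_enum k)) := u0 k; rewrite mulf_eq0 orbb => /eqP.
Qed.

End Dot.

Section NondegenerateSystem.
Context {K : fieldType} {V : vectType K} {S : {vspace V}}.
Context {b : V -> V -> K} {l : V -> K}.
Hypothesis b_scalarl : forall q, scalar (b^~ q).
Hypothesis b_scalarr : forall p, scalar (b p).
Hypothesis l_scalar : scalar l.
Hypothesis b_nondeg : forall p, p \in S -> {in S, forall q, b p q = 0} -> p = 0.

Lemma scalar_coord_vbasis (f : V -> K) : scalar f ->
  {in S, forall q, f q = \sum_(j < \dim S) coord (vbasis S) j q * f (vbasis S)`_j}.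
Proof.
move=> f_scalar q Sq.
pose g : {scalar V} := HB.pack f (GRing.isLinear.Build K V K *%R f f_scalar).
rewrite -[f q]/(g q) {1}(coord_vbasis Sq) linear_sum.
by apply: eq_bigr => j _; rewrite linearZ.
Qed.

Definition gram_row (p : V) : 'rV[K]_(\dim S) := \row_j b p (vbasis S)`_j.

Lemma gram_row_linear : linear gram_row.
Proof. by move=> a p p'; apply/rowP => j; rewrite !mxE b_scalarl. Qed.

Lemma gram_row_eq_on (f : V -> K) p : scalar f ->
  {in S, b p =1 f} <-> gram_row p = \row_j f (vbasis S)`_j.
Proof.
move=> f_scalar; split=> [bf | /rowP bf q Sq].
  by apply/rowP => j; rewrite !mxE bf // vbasis_mem // mem_nth ?size_tuple.
rewrite (scalar_coord_vbasis _ (b_scalarr p)) // (scalar_coord_vbasis _ f_scalar) //.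
by apply: eq_bigr => j _; have := bf j; rewrite !mxE => ->.
Qed.

Lemma nondegenerate_system_unique_solution :
  exists! p, p \in S /\ {in S, b p =1 l}.
Proof.
pose gram_lin : {linear V -> 'rV[K]_(\dim S)} :=
  HB.pack gram_row (GRing.isLinear.Build K V _ *:%R gram_row gram_row_linear).
pose T := linfun gram_lin.
have TE p : T p = gram_row p by rewrite lfunE.
have kerT : (S :&: lker T = 0)%VS.
  apply/eqP; rewrite -subv0; apply/subvP => p.
  rewrite memv_cap memv_ker memv0 TE => /andP [Sp /eqP Tp0].
  apply/eqP/b_nondeg => //; apply/(gram_row_eq_on (fun _ => 0)).
    by move=> a x y; rewrite mulr0 addr0.
  by apply/rowP => j; rewrite Tp0 !mxE.
(* injective on S, hence onto 'rV_(\dim S) by counting dimensions *)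
have imT : (T @: S = fullv)%VS.
  by apply/eqP; rewrite eqEdim subvf limg_dim_eq // dimvf /dim /= mul1n.
have T_inj : {in S &, injective T}.
  move=> p p' Sp Sp' /eqP; rewrite -subr_eq0 -linearB => /eqP Tp0.
  apply/eqP; rewrite -subr_eq0 -memv0 -kerT memv_cap memvB //=.
  by rewrite memv_ker Tp0.
have /memv_imgP [p Sp rE] : \row_j l (vbasis S)`_j \in (T @: S)%VS.
  by rewrite imT memvf.
have sol_p : {in S, b p =1 l} by apply/gram_row_eq_on => //; rewrite -TE.
exists p; split=> // p' [Sp' sol_p']; apply: T_inj => //.
rewrite !TE; move: sol_p sol_p'.
by move=> /(gram_row_eq_on _ _ l_scalar) -> /(gram_row_eq_on _ _ l_scalar).
Qed.
End NondegenerateSystem.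

Section NodalForms.
Context {R : rcfType} {NC : nat} {N : 'I_NC -> nat} {X : @vecfun R NC N}.
Local Notation vecfun := (@vecfun R NC N).
Local Notation scalfun := (@scalfun R NC N).
Local Notation mlump_s := (mlump_s N X).
Local Notation mlump_v := (mlump_v N X).
Local Notation stiff := (stiff N X).

Definition vcomb (a : R) (U V : vecfun) : vecfun := fun i j => a *: U i j + V i j.
Definition scomb (a : R) (u v : scalfun) : scalfun := fun i j => a * u i j + v i j.
Definition pdot (U V : vecfun) : scalfun := fun i j => dot (U i j) (V i j).
Definition vzero : vecfun := fun _ _ => 0.
Definition szero : scalfun := fun _ _ => 0.

Lemma sum_nodes_comb (f g h : 'I_NC -> nat -> R) a :
  (forall i j, f i j = a * g i j + h i j) ->
  \sum_(i < NC) \sum_(1 <= j < (N i).+1) f i j =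
  a * (\sum_(i < NC) \sum_(1 <= j < (N i).+1) g i j) +
  \sum_(i < NC) \sum_(1 <= j < (N i).+1) h i j.
Proof.
move=> fE; rewrite mulr_sumr -big_split; apply: eq_bigr => i _.
by rewrite mulr_sumr -big_split; apply: eq_bigr => j _.
Qed.

Lemma mlump_sC u v : mlump_s u v = mlump_s v u.
Proof.
congr (_ * _); apply: eq_bigr => i _; apply: eq_bigr => j _.
by rewrite !(mulrC (at_ (u i) _)).
Qed.

Lemma mlump_s_combl a u u' v :
  mlump_s (scomb a u u') v = a * mlump_s u v + mlump_s u' v.
Proof.
rewrite /Defs.mlump_s mulrCA -mulrDr; congr (_ * _).
by apply: sum_nodes_comb => i j; rewrite /at_ /scomb; ring.
Qed.

Lemma mlump_s_combr a u v v' :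
  mlump_s u (scomb a v v') = a * mlump_s u v + mlump_s u v'.
Proof. by rewrite !(mlump_sC u) mlump_s_combl. Qed.

Lemma mlump_s0r u : mlump_s u szero = 0.
Proof.
rewrite /Defs.mlump_s big1 ?mulr0 // => i _; rewrite big1 // => j _.
by rewrite /at_ /szero !mulr0 addr0 mulr0.
Qed.

Lemma stiffC U V : stiff U V = stiff V U.
Proof. by apply: eq_bigr => i _; apply: eq_bigr => j _; rewrite dotC. Qed.

Lemma stiff_combl a U U' V :
  stiff (vcomb a U U') V = a * stiff U V + stiff U' V.
Proof.
by apply: sum_nodes_comb => i j; rewrite /at_ /vcomb !dotBl !dotDl !dotZl; ring.
Qed.

Lemma stiff_combr a U V V' :
  stiff U (vcomb a V V') = a * stiff U V + stiff U V'.
Proof. by rewrite !(stiffC U) stiff_combl. Qed.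

Lemma stiff0r U : stiff U vzero = 0.
Proof.
rewrite /Defs.stiff big1 // => i _; rewrite big1 // => j _.
by rewrite /at_ /vzero subrr dot0r mul0r.
Qed.

Lemma mlump_vC U V : mlump_v U V = mlump_v V U.
Proof.
congr (_ * _); apply: eq_bigr => i _; apply: eq_bigr => j _.
by rewrite !(dotC (at_ (U i) _)).
Qed.

Lemma mlump_v_cvmul c U V : mlump_v (cvmul N c U) V = c * mlump_v U V.
Proof.
rewrite /Defs.mlump_v mulrCA; congr (_ * _); rewrite mulr_sumr; apply: eq_bigr => i _.
by rewrite mulr_sumr; apply: eq_bigr => j _; rewrite /at_ /cvmul !dotZl; ring.
Qed.

Lemma mlump_v_svmul u W V : mlump_v (svmul N u W) V = mlump_s u (pdot V W).
Proof.
congr (_ * _); apply: eq_bigr => i _; apply: eq_bigr => j _.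
by rewrite /at_ /svmul /pdot !dotZl !(dotC (W i _)).
Qed.

Lemma pdot_combl a U V W : pdot (vcomb a U V) W = scomb a (pdot U W) (pdot V W).
Proof.
apply: nodal_ext => i j.
by rewrite /pdot /vcomb /scomb dotDl dotZl.
Qed.

Lemma pdot0l W : pdot vzero W = szero.
Proof.
apply: nodal_ext => i j.
exact: dot0l.
Qed.

Lemma hseg_ge0 i j : 0 <= hseg N X i j.
Proof. exact: sqrtr_ge0. Qed.

Lemma mlump_s_ge0 u : 0 <= mlump_s u u.
Proof.
apply: mulr_ge0; first by rewrite invr_ge0 ler0n.
apply: sumr_ge0 => i _; apply: sumr_ge0 => j _.
by rewrite mulr_ge0 ?hseg_ge0 // addr_ge0 // -expr2 sqr_ge0.
Qed.

Lemma stiff_ge0 U : 0 <= stiff U U.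
Proof.
by apply: sumr_ge0 => i _; apply: sumr_ge0 => j _; rewrite divr_ge0 ?dot_ge0 ?hseg_ge0.
Qed.

Lemma sum_nodes_eq0 {f : 'I_NC -> nat -> R} :
  (forall i j, 0 <= f i j) -> \sum_(i < NC) \sum_(1 <= j < (N i).+1) f i j = 0 ->
  forall i j, (0 < j <= N i)%N -> f i j = 0.
Proof.
move=> f_ge0 /psumr_eq0P sum0 i j ij.
have /eqP := sum0 (fun i _ => sumr_ge0 _ (fun j _ => f_ge0 i j)) i isT.
rewrite psumr_eq0 // => /allP /(_ j).
by rewrite mem_index_iota ltnS => /(_ ij) /eqP.
Qed.

Hypothesis N_gt0 : forall i, (0 < N i)%N.
Hypothesis hseg_gt0 : forall i j, (0 < j <= N i)%N -> 0 < hseg N X i j.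

Lemma mlump_s_eq0 u : mlump_s u u = 0 -> u = szero.
Proof.
move=> /eqP; rewrite mulf_eq0 invr_eq0 pnatr_eq0 /= => /eqP sum0.
have term_ge0 i j : 0 <= hseg N X i j *
    (at_ (u i) j * at_ (u i) j + at_ (u i) j.-1 * at_ (u i) j.-1).
  by rewrite mulr_ge0 ?hseg_ge0 // addr_ge0 // -expr2 sqr_ge0.
have nodes0 i j : (0 < j <= N i)%N -> at_ (u i) j = 0 /\ at_ (u i) j.-1 = 0.
  move=> ij; have /eqP := sum_nodes_eq0 term_ge0 sum0 i j ij.
  rewrite mulf_eq0 (gt_eqF (hseg_gt0 _ _ ij)) paddr_eq0 -?expr2 ?sqr_ge0 //.
  by rewrite !sqrf_eq0 => /andP [/eqP -> /eqP ->].
apply: nodal_ext => i j.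
rewrite /szero -[j]inord_val -/(at_ (u i) j).
case: j => [[|k] k_lt] /=.
  by have [_ ->] := nodes0 i 1%N (N_gt0 i).
by have [-> _] := nodes0 i k.+1 k_lt.
Qed.

Lemma stiff_eq0 U : stiff U U = 0 -> forall i j, U i j = U i ord0.
Proof.
move=> /sum_nodes_eq0 seg0 i j.
have seg_eq k : (0 < k <= N i)%N -> at_ (U i) k = at_ (U i) k.-1.
  move=> ik; have /eqP := seg0 (fun i j => divr_ge0 (dot_ge0 _) (hseg_ge0 i j)) i k ik.
  by rewrite mulf_eq0 invr_eq0 (gt_eqF (hseg_gt0 _ _ ik)) orbF dot_eq0 subr_eq0 => /eqP.
have: at_ (U i) j = at_ (U i) 0.
  elim: (nat_of_ord j) (ltn_ord j) => [//|k IH] k_lt.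
  by rewrite seg_eq // IH // ltnW.
by rewrite at_ord0 /at_ inord_val.
Qed.

End NodalForms.

Lemma orthogonal_rank3_eq0 (R : rcfType) (s : seq 'rV[R]_3) c :
  \rank (rowsmx s) = 3%N -> {in s, forall v, dot c v = 0} -> c = 0.
Proof.
move=> rank3 c_orth; apply: trmx_inj; rewrite trmx0.
apply: (@row_full_inj _ _ _ _ (rowsmx s)); first by rewrite /row_full rank3.
rewrite mulmx0; apply/matrixP => k z; rewrite (ord1 z) !mxE.
rewrite -[RHS](c_orth (nth 0 s k)) ?mem_nth // dotC /dot !mxE.
by apply: eq_bigr => m _; rewrite !mxE.
Qed.

(* Nodal values indexed by pairs (curve, node): unlike the dependent function
   types [vecfun] and [scalfun], this carries a vectType structure. *)
Section Coordinates.
Context {R : rcfType} {NC : nat} {N : 'I_NC -> nat}.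
Local Notation node := {i : 'I_NC & 'I_(N i).+1}.
Local Notation coords_space := ({ffun node -> 'rV[R]_3} * {ffun node -> R^o})%type.

Definition vecpart (v : coords_space) : @vecfun R NC N := fun i j => v.1 (Tagged _ j).
Definition scalpart (v : coords_space) : @scalfun R NC N := fun i j => v.2 (Tagged _ j).
Definition coords (U : @vecfun R NC N) (u : @scalfun R NC N) : coords_space :=
  ([ffun x => U (tag x) (tagged x)], [ffun x => u (tag x) (tagged x)]).

Lemma vecpart_coords U u : vecpart (coords U u) = U.
Proof.
apply: nodal_ext => i j.
by rewrite /vecpart ffunE.
Qed.

Lemma scalpart_coords U u : scalpart (coords U u) = u.
Proof.
apply: nodal_ext => i j.
by rewrite /scalpart ffunE.
Qed.

Lemma coords_parts v : coords (vecpart v) (scalpart v) = v.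
Proof. by case: v => v1 v2; congr (_, _); apply/ffunP => -[i j]; rewrite ffunE. Qed.

Lemma vecpart_comb a v w : vecpart (a *: v + w) = vcomb a (vecpart v) (vecpart w).
Proof.
apply: nodal_ext => i j.
by rewrite /vecpart /vcomb /= !ffunE.
Qed.

Lemma scalpart_comb a v w : scalpart (a *: v + w) = scomb a (scalpart v) (scalpart w).
Proof.
apply: nodal_ext => i j.
by rewrite /scalpart /scomb /= !ffunE.
Qed.

End Coordinates.

Section Network.
Context {R : rcfType} {NC : nat} {N : 'I_NC -> nat} {closed : 'I_NC -> bool}
  {NT : nat} {ic : 'I_NT -> 'I_3 -> 'I_NC} {rho : 'I_NT -> 'I_3 -> bool}
  {gradPhi : 'rV[R]_3 -> 'rV[R]_3} {X : @vecfun R NC N}.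
Hypothesis N_gt0 : forall i, (0 < N i)%N.
Hypothesis X_in : inV N closed ic rho X.
Hypothesis HA : assumption_A N closed X.
Hypothesis HA1 : assumption_A1 N closed gradPhi X.
Hypothesis HA2 : assumption_A2 N closed ic gradPhi X.
Hypothesis open_ends : forall (i : 'I_NC) (r : bool), ~~ closed i ->
  exists (k : 'I_NT) (l : 'I_3), ic k l = i /\ rho k l = r.

Local Notation vecfun := (@vecfun R NC N).
Local Notation scalfun := (@scalfun R NC N).
Local Notation mlump_s := (mlump_s N X).
Local Notation mlump_v := (mlump_v N X).
Local Notation stiff := (stiff N X).
Local Notation omega_M := (omega_M N closed gradPhi X).
Local Notation omega_Phi := (omega_Phi N gradPhi X).
Local Notation omM := (omegaM_fun N closed gradPhi X).
Local Notation inW := (inW N closed).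
Local Notation inVPhi := (inVPhi N closed ic rho gradPhi X).

Lemma omega_M_periodic i : closed i -> omega_M i 0 = omega_M i (N i).
Proof.
move=> ci; have Ni_neq0 : (N i == 0%N) = false by apply/negbTE; rewrite -lt0n.
rewrite /Defs.omega_M /Defs.omega_Phi /omega_d /nxt /prv eqxx ci eq_sym Ni_neq0 eqxx.
by rewrite at_ord0 at_ord_max (X_in.1 i ci).
Qed.

Lemma tangent_constant_eq0 D : inVPhi D -> (forall i j, D i j = D i ord0) ->
  pdot D omM = szero -> D = vzero.
Proof.
move=> [[_ D_junction] D_tangent] D_const D_normal.
have orth i j : (j <= N i)%N ->
    dot (D i ord0) (omega_M i j) = 0 /\ dot (D i ord0) (omega_Phi i j) = 0.
  move=> ij; rewrite -(D_const i (inord j)).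
  have := congr1 (fun f => f i (inord j)) D_normal; have := D_tangent i (inord j).
  by rewrite /pdot /omegaM_fun inordK.
suff D0 i : D i ord0 = 0.
  by apply: nodal_ext => i j; rewrite D_const D0.
have [ci | oi] := boolP (closed i).
  apply: orthogonal_rank3_eq0 (HA1 i ci) _ => v.
  rewrite mem_cat => /orP [] /mapP [j];
    by rewrite mem_iota add1n ltnS => /andP [_ /orth []] ? ? ->.
have [k [l [ikl _]]] := open_ends i false oi.
have D_junction_const l' : D (ic k l') ord0 = D i ord0.
  by have := D_junction k l' l; rewrite /at_ !D_const ikl.
apply: orthogonal_rank3_eq0 (HA2 k) _ => v /flatten_mapP [l' _].
rewrite -(D_junction_const l') mem_cat => /orP [] /mapP [j];
  rewrite mem_iota add1n ltnS => /andP [_ /leq_trans/(_ (leq_pred _))/orth []] ? ? -> //.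
Qed.

Section HomogeneousSystem.
Context {sigma tau : R} {D : vecfun} {K : scalfun}.
Hypotheses (sigma_gt0 : 0 < sigma) (tau_gt0 : 0 < tau).
Hypotheses (D_in : inVPhi D) (K_in : inW K).
Hypothesis chi_eq : forall chi, inW chi ->
  tau^-1 * mlump_s chi (pdot D omM) - sigma * mlump_s K chi = 0.
Hypothesis eta_eq : forall eta, inVPhi eta ->
  mlump_s K (pdot eta omM) + stiff D eta = 0.

Lemma homogeneous_energy : sigma * mlump_s K K + tau^-1 * stiff D D = 0.
Proof.
have e1 := chi_eq K K_in; have e2 := eta_eq D D_in.
set KK := mlump_s K K in e1 *; set KD := mlump_s K _ in e1 e2; set DD := stiff D D in e2 *.
transitivity (tau^-1 * (KD + DD) - (tau^-1 * KD - sigma * KK)); first by ring.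
by rewrite e1 e2 mulr0 subr0.
Qed.

Lemma homogeneous_dissipation : mlump_s K K = 0 /\ stiff D D = 0.
Proof.
have KK_ge0 : 0 <= sigma * mlump_s K K := mulr_ge0 (ltW sigma_gt0) (mlump_s_ge0 K).
have DD_ge0 : 0 <= tau^-1 * stiff D D.
  by rewrite mulr_ge0 ?invr_ge0 ?(ltW tau_gt0) ?stiff_ge0.
have /eqP := homogeneous_energy.
rewrite paddr_eq0 // (mulf_eq0 sigma) (mulf_eq0 tau^-1) invr_eq0.
by rewrite (gt_eqF sigma_gt0) (gt_eqF tau_gt0) => /andP [/eqP -> /eqP ->].
Qed.

Lemma homogeneous_K_eq0 : K = szero.
Proof. exact: (mlump_s_eq0 N_gt0 HA.1 _ homogeneous_dissipation.1). Qed.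

Lemma homogeneous_normal_eq0 : pdot D omM = szero.
Proof.
have nD_in : inW (pdot D omM).
  move=> i ci; rewrite /pdot (D_in.1.1 i ci) /omegaM_fun /=.
  by rewrite [in LHS](omega_M_periodic i ci).
apply: (mlump_s_eq0 N_gt0 HA.1); have /eqP := chi_eq _ nD_in.
rewrite homogeneous_K_eq0 mlump_sC mlump_s0r mulr0 subr0.
by rewrite (mulf_eq0 tau^-1) invr_eq0 (gt_eqF tau_gt0) => /eqP.
Qed.

Lemma homogeneous_D_eq0 : D = vzero.
Proof.
apply: tangent_constant_eq0 D_in _ homogeneous_normal_eq0.
exact: (stiff_eq0 HA.1 _ homogeneous_dissipation.2).
Qed.

End HomogeneousSystem.

Local Notation node := {i : 'I_NC & 'I_(N i).+1}.
Local Notation coords_space := ({ffun node -> 'rV[R]_3} * {ffun node -> R^o})%type.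
Local Notation constraint_space :=
  (({ffun 'I_NC -> 'rV[R]_3} * {ffun 'I_NC -> R^o}) *
   ({ffun 'I_NT * 'I_3 * 'I_3 -> 'rV[R]_3} * {ffun node -> R^o}))%type.

Definition constraints (v : coords_space) : constraint_space :=
  (([ffun i => if closed i then vecpart v i ord0 - vecpart v i ord_max else 0],
    [ffun i => if closed i then scalpart v i ord0 - scalpart v i ord_max else 0 : R^o]),
   ([ffun t : 'I_NT * 'I_3 * 'I_3 =>
       at_ (vecpart v (ic t.1.1 t.1.2)) (endnode N (ic t.1.1 t.1.2) (rho t.1.1 t.1.2))
     - at_ (vecpart v (ic t.1.1 t.2)) (endnode N (ic t.1.1 t.2) (rho t.1.1 t.2))],
    [ffun x => dot (v.1 x) (omega_Phi (tag x) (tagged x)) : R^o])).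

Lemma constraints_linear : linear constraints.
Proof.
move=> a v w; congr (_, _, (_, _)); apply/ffunP => x;
  rewrite !ffunE /= ?vecpart_comb ?scalpart_comb /vcomb /scomb.
- by case: (closed x); rewrite ?scaler0 ?addr0 // scalerBr opprD addrACA.
- by case: (closed x); rewrite ?scaler0 ?addr0 // scalerBr opprD addrACA.
- by rewrite scalerBr opprD addrACA.
- by rewrite dotDl dotZl.
Qed.

Lemma constraints_eq0 v :
  constraints v = 0 <-> inVPhi (vecpart v) /\ inW (scalpart v).
Proof.
split=> [[[/ffunP V_per /ffunP s_per] [/ffunP V_junc /ffunP V_tan]] |
         [[[V_per V_junc] V_tan] s_per]].
  split; [split; [split|] |].
  - by move=> i ci; move: (V_per i); rewrite !ffunE ci => /eqP; rewrite subr_eq0 => /eqP.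
  - move=> k l l'; move: (V_junc (k, l, l')); rewrite !ffunE.
    by move=> /eqP; rewrite subr_eq0 => /eqP.
  - by move=> i j; move: (V_tan (Tagged _ j)); rewrite !ffunE.
  - by move=> i ci; move: (s_per i); rewrite !ffunE ci => /eqP; rewrite subr_eq0 => /eqP.
congr (_, _, (_, _)); apply/ffunP => x; rewrite !ffunE.
- by case cx: (closed x); rewrite // V_per // subrr.
- by case cx: (closed x); rewrite // s_per // subrr.
- by rewrite (V_junc x.1.1 x.1.2 x.2) subrr.
- by case: x => i j; apply: V_tan.
Qed.

Definition constraints_lin : {linear coords_space -> constraint_space} :=
  HB.pack constraints
    (GRing.isLinear.Build R coords_space constraint_space *:%R
      constraints constraints_linear).

Definition admissible : {vspace coords_space} := lker (linfun constraints_lin).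

Lemma mem_admissible v : v \in admissible <-> inVPhi (vecpart v) /\ inW (scalpart v).
Proof. by rewrite memv_ker lfunE -constraints_eq0; split => /eqP. Qed.

Lemma coords_admissible {U u} : inVPhi U -> inW u -> coords U u \in admissible.
Proof.
by move=> U_in u_in; apply/mem_admissible; rewrite vecpart_coords scalpart_coords.
Qed.

Lemma vzero_inVPhi : inVPhi vzero.
Proof. by split; [split|] => *; rewrite /vzero ?dot0l. Qed.

Section DiscreteSystem.
Variables (sigma tau : R) (F : scalfun).
Hypotheses (sigma_gt0 : 0 < sigma) (tau_gt0 : 0 < tau).

(* [bform] adds the left-hand sides of the two equations, with omega_M moved
   onto the other factor, and [lform] adds their right-hand sides. *)
Definition bform (v w : coords_space) : R :=
  (tau^-1 * mlump_s (scalpart w) (pdot (vecpart v) omM)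
    - sigma * mlump_s (scalpart v) (scalpart w))
  + (mlump_s (scalpart v) (pdot (vecpart w) omM) + stiff (vecpart v) (vecpart w)).

Definition lform (w : coords_space) : R :=
  mlump_s F (scalpart w) + - stiff X (vecpart w).

Lemma bform_scalarl w : scalar (bform^~ w).
Proof.
move=> a v v'; rewrite /bform vecpart_comb scalpart_comb pdot_combl.
rewrite mlump_s_combl mlump_s_combr mlump_s_combl stiff_combl; ring.
Qed.

Lemma bform_scalarr v : scalar (bform v).
Proof.
move=> a w w'; rewrite /bform vecpart_comb scalpart_comb pdot_combl.
rewrite mlump_s_combl mlump_s_combr mlump_s_combr stiff_combr; ring.
Qed.

Lemma lform_scalar : scalar lform.
Proof.
by move=> a w w'; rewrite /lform vecpart_comb scalpart_comb mlump_s_combr stiff_combr; ring.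
Qed.

Lemma bform_chi v chi :
  bform v (coords vzero chi) =
  tau^-1 * mlump_s chi (pdot (vecpart v) omM) - sigma * mlump_s (scalpart v) chi.
Proof.
by rewrite /bform vecpart_coords scalpart_coords pdot0l mlump_s0r stiff0r !addr0.
Qed.

Lemma bform_eta v eta :
  bform v (coords eta szero) =
  mlump_s (scalpart v) (pdot eta omM) + stiff (vecpart v) eta.
Proof.
rewrite /bform vecpart_coords scalpart_coords [mlump_s szero _]mlump_sC.
by rewrite !mlump_s0r !mulr0 subr0 add0r.
Qed.

Lemma lform_chi chi : lform (coords vzero chi) = mlump_s F chi.
Proof. by rewrite /lform vecpart_coords scalpart_coords stiff0r oppr0 addr0. Qed.

Lemma lform_eta eta : lform (coords eta szero) = - stiff X eta.
Proof. by rewrite /lform vecpart_coords scalpart_coords mlump_s0r add0r. Qed.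

Lemma bform_nondegenerate p :
  p \in admissible -> {in admissible, forall q, bform p q = 0} -> p = 0.
Proof.
move=> /mem_admissible [D_in K_in] p_null.
have chi_eq chi : inW chi -> tau^-1 * mlump_s chi (pdot (vecpart p) omM)
    - sigma * mlump_s (scalpart p) chi = 0.
  by move=> chi_in; rewrite -bform_chi p_null //; apply: coords_admissible vzero_inVPhi _.
have eta_eq eta : inVPhi eta ->
    mlump_s (scalpart p) (pdot eta omM) + stiff (vecpart p) eta = 0.
  by move=> eta_in; rewrite -bform_eta p_null //; exact: coords_admissible.
rewrite -[p]coords_parts (homogeneous_D_eq0 sigma_gt0 tau_gt0 D_in K_in chi_eq eta_eq).
rewrite (homogeneous_K_eq0 sigma_gt0 tau_gt0 D_in K_in chi_eq eta_eq).
by congr (_, _); apply/ffunP => x; rewrite !ffunE.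
Qed.

Lemma discrete_equations_bform {D K} : inVPhi D -> inW K ->
  (forall chi, inW chi ->
     mlump_v (cvmul N tau^-1 D) (svmul N chi omM) - sigma * mlump_s K chi
     = mlump_s F chi) /\
  (forall eta, inVPhi eta -> mlump_v (svmul N K omM) eta + stiff D eta = - stiff X eta)
  <-> {in admissible, bform (coords D K) =1 lform}.
Proof.
move=> D_in K_in; have reduce_chi chi : mlump_v (cvmul N tau^-1 D) (svmul N chi omM) =
    tau^-1 * mlump_s chi (pdot D omM) by rewrite mlump_v_cvmul mlump_vC mlump_v_svmul.
split=> [[chi_eq eta_eq] w /mem_admissible [eta_in chi_in] | sol].
  rewrite /bform /lform !vecpart_coords !scalpart_coords -chi_eq // -eta_eq //.
  by rewrite reduce_chi mlump_v_svmul.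
split=> [chi chi_in | eta eta_in].
  rewrite reduce_chi -lform_chi -sol; last exact: coords_admissible vzero_inVPhi chi_in.
  by rewrite bform_chi vecpart_coords scalpart_coords.
rewrite mlump_v_svmul -lform_eta -sol; last exact: coords_admissible.
by rewrite bform_eta vecpart_coords scalpart_coords.
Qed.

End DiscreteSystem.
End Network.

Theorem mainTheorem1
  (R : rcfType) (NC : nat) (N : 'I_NC -> nat) (closed : 'I_NC -> bool)
  (NT : nat) (ic : 'I_NT -> 'I_3 -> 'I_NC) (rho : 'I_NT -> 'I_3 -> bool)
  (* network topology *)
  (HN : forall i : 'I_NC, (0 < N i)%N)
  (Hdistinct : forall (k : 'I_NT) (l l' : 'I_3), ic k l = ic k l' -> l = l')
  (Hopen : forall (k : 'I_NT) (l : 'I_3), ~~ closed (ic k l))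
  (Hends : forall (i : 'I_NC) (r : bool), ~~ closed i ->
             exists (k : 'I_NT) (l : 'I_3), ic k l = i /\ rho k l = r)
  (* gradient of Phi *)
  (gradPhi : 'rV[R]_3 -> 'rV[R]_3)
  (* the current parameterization X^m *)
  (X : @vecfun R NC N)
  (HX : @inV R NC N closed NT ic rho X)
  (HgradX : forall (i : 'I_NC) (j : 'I_(N i).+1), gradPhi (X i j) != 0)
  (HA : assumption_A N closed X)
  (HA1 : assumption_A1 N closed gradPhi X)
  (HA2 : assumption_A2 N closed ic gradPhi X)
  (sigma tau : R) (Hsigma : 0 < sigma) (Htau : 0 < tau)
  (F : @scalfun R NC N) (HF : inW N closed F) :
  exists! p : @vecfun R NC N * @scalfun R NC N,
    inVPhi N closed ic rho gradPhi X p.1 /\ inW N closed p.2 /\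
    (forall chi : @scalfun R NC N, inW N closed chi ->
       mlump_v N X (cvmul N tau^-1 p.1) (svmul N chi (omegaM_fun N closed gradPhi X))
       - sigma * mlump_s N X p.2 chi = mlump_s N X F chi) /\
    (forall eta : @vecfun R NC N, inVPhi N closed ic rho gradPhi X eta ->
       mlump_v N X (svmul N p.2 (omegaM_fun N closed gradPhi X)) eta + stiff N X p.1 eta
       = - stiff N X X eta).
Proof.
have [p [[p_adm p_sol] p_unique]] := nondegenerate_system_unique_solution
  (bform_scalarl sigma tau) (bform_scalarr sigma tau) (lform_scalar (X := X) F)
  (bform_nondegenerate HN HX HA HA1 HA2 Hends sigma tau Hsigma Htau).
have [p1_in p2_in] := (mem_admissible p).1 p_adm.
have := (discrete_equations_bform sigma tau F p1_in p2_in).2.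
rewrite coords_parts => /(_ p_sol) p_eqs.
exists (vecpart p, scalpart p); split => [// | [D K] /= [D_in [K_in DK_eqs]]].
have DK_adm := coords_admissible D_in K_in.
have DK_sol := (discrete_equations_bform sigma tau F D_in K_in).1 DK_eqs.
by rewrite (p_unique _ (conj DK_adm DK_sol)) vecpart_coords scalpart_coords.
Qed.
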